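(* Fix $m\ge1$ and $1\le s\le 3$, and put $k=4-s$. Let $f\in\mathbb{F}_q[x_1,\dots,x_k]$ and $G\in\mathbb{F}_q[x_1,x_2,x_3]$. Assume that for every monomial $x^\alpha=x_1^{\alpha_1}\cdots x_k^{\alpha_k}$ of $f$ and every monomial $x^\gamma=x_1^{\gamma_1}x_2^{\gamma_2}x_3^{\gamma_3}$ of $G$ there exists $t\in\{1,\dots,k\}$ with $\alpha_t+\gamma_t\ge q^m-1$ (when $k<3$, $\gamma$ is restricted to its first $k$ coordinates). Let $L_k=\det(x_i^{q^{j-1}})_{1\le i,j\le k}$ be the Moore determinant in $x_1,\dots,x_k$. Then $$\big(V_4^{\,q-1}G\big)\,f\,L_k\in I_m(4)=(x_1^{q^m},x_2^{q^m},x_3^{q^m},x_4^{q^m}),$$ so this product is zero in $\mathcal{Q}_m(4)=\mathbb{F}_q[x_1,\dots,x_4]/I_m(4)$.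
   Context: $q=p^r$, $p$ prime. $V_4=L_4/L_3$ is the upper triangular (Mui) invariant in $x_1,\dots,x_4$, where $L_n$ is the $n\times n$ Moore determinant $\det(x_j^{q^{i}})_{0\le i\le n-1,1\le j\le n}$; equivalently $V_4=\prod(x_4+a x_1+b x_2+c x_3)$ over $(a,b,c)\in\mathbb{F}_q^3$. *)

From HB Require Import structures.
From mathcomp Require Import all_boot all_order all_algebra all_field.
From mathcomp Require Import mpoly.
Set Implicit Arguments. Unset Strict Implicit. Unset Printing Implicit Defensive.
Import GRing.Theory.
Local Open Scope ring_scope.

(* Variables x_1,...,x_4 are 'X_0,...,'X_3 of {mpoly F[4]}; q = #|F|. *)
Notation var F i := ('X_(inord i) : {mpoly F[4]}).

Definition V4 (F : finFieldType) : {mpoly F[4]} :=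
  \prod_(a : F) \prod_(b : F) \prod_(c : F)
     (var F 3 + a *: var F 0 + b *: var F 1 + c *: var F 2).

Definition moore (F : finFieldType) (k : nat) : {mpoly F[4]} :=
  \det (\matrix_(i < k, j < k) (var F i ^+ (#|F| ^ j)%N)).

Definition in_Im (F : finFieldType) (m : nat) (P : {mpoly F[4]}) : Prop :=
  exists h : 'I_4 -> {mpoly F[4]},
    P = \sum_(i < 4) h i * ('X_i ^+ (#|F| ^ m)%N).

From HB Require Import structures.
From mathcomp Require Import all_boot all_order all_algebra all_field.
From mathcomp Require Import mpoly.
Import GRing.Theory.
Local Open Scope ring_scope.

(* Neither the factor V_4^(q-1) nor the restrictions on m, s and on the
   variables occurring in f and G play any role.  The Moore determinant L_k is
   divisible by every x_t with t < k (each entry of row t is a power of x_t),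
   and for a pair of monomials x^a of f and x^g of G the hypothesis provides
   such a t with a_t + g_t >= q^m - 1, so x^a x^g x_t is a multiple of
   x_t^(q^m).  Expanding G f L_k along the monomials of f and G therefore
   lands in I_m(4). *)

Lemma det_row_factor (R : comPzRingType) n (A : 'M[R]_n) (i : 'I_n) (x : R)
    (B : 'I_n -> R) :
  (forall j, A i j = x * B j) -> \det A = x * \sum_j B j * cofactor A i j.
Proof.
move=> rowA; rewrite (expand_det_row _ i) mulr_sumr.
by apply: eq_bigr => j _; rewrite rowA mulrA.
Qed.

Lemma moore_var_factor (F : finFieldType) k (i : 'I_k) :
  exists M, moore F k = var F i * M.
Proof.
have q_gt0 : (0 < #|F|)%N by apply/card_gt0P; exists 0.
eexists; apply: (@det_row_factor _ _ _ _ _ (fun j => var F i ^+ (#|F| ^ j).-1)) => j.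
by rewrite mxE -exprS prednK // expn_gt0 q_gt0.
Qed.

Section IdealIm.
Variables (F : finFieldType) (m : nat).
Local Notation qm := (#|F| ^ m)%N.

Lemma in_Im0 : in_Im m (0 : {mpoly F[4]}).
Proof. by exists (fun _ => 0); rewrite big1 // => i _; rewrite mul0r. Qed.

Lemma in_ImD (P Q : {mpoly F[4]}) : in_Im m P -> in_Im m Q -> in_Im m (P + Q).
Proof.
move=> [h ->] [h' ->]; exists (fun i => h i + h' i).
by rewrite -big_split; apply: eq_bigr => i _; rewrite mulrDl.
Qed.

Lemma in_ImMl (Q P : {mpoly F[4]}) : in_Im m P -> in_Im m (Q * P).
Proof.
move=> [h ->]; exists (fun i => Q * h i).
by rewrite mulr_sumr; apply: eq_bigr => i _; rewrite mulrA.
Qed.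

Lemma in_Im_sum (I : eqType) (r : seq I) (P : I -> {mpoly F[4]}) :
  (forall i, i \in r -> in_Im m (P i)) -> in_Im m (\sum_(i <- r) P i).
Proof.
move=> inP; rewrite big_seq_cond.
by apply: big_ind => //; [exact: in_Im0 | exact: in_ImD | move=> i /andP[/inP]].
Qed.

Lemma in_Im_mulX (Q : {mpoly F[4]}) (t : 'I_4) : in_Im m (Q * 'X_t ^+ qm).
Proof.
exists (fun j => if j == t then Q else 0).
rewrite (bigD1 t) //= eqxx big1 ?addr0 // => j /negbTE->; exact: mul0r.
Qed.

Lemma in_Im_mpolyX (n : 'X_{1..4}) (t : 'I_4) :
  (qm <= n t)%N -> in_Im m ('X_[n] : {mpoly F[4]}).
Proof.
move=> le_qm_nt; rewrite mpolyXE_id (bigD1 t) //= -(subnK le_qm_nt) exprD.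
by rewrite mulrC mulrA; apply: in_Im_mulX.
Qed.

Lemma in_Im_mpolyX_mulX (n : 'X_{1..4}) (t : 'I_4) (Q : {mpoly F[4]}) :
  (qm - 1 <= n t)%N -> in_Im m ('X_[n] * ('X_t * Q)).
Proof.
move=> le_qm1_nt; rewrite mulrA mulrC; apply: in_ImMl; rewrite -mpolyXD.
apply: (in_Im_mpolyX _ t); rewrite mnmDE mnm1E eqxx addn1.
by rewrite leq_subLR add1n in le_qm1_nt.
Qed.

Lemma in_Im_mul_msupp (P Q R : {mpoly F[4]}) :
  (forall a g, a \in msupp P -> g \in msupp Q -> in_Im m ('X_[a + g] * R)) ->
  in_Im m (P * Q * R).
Proof.
move=> inPQ; rewrite [P]mpolyE [Q]mpolyE !mulr_suml; apply: in_Im_sum => a aP.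
rewrite mulr_sumr mulr_suml; apply: in_Im_sum => g gQ.
rewrite -!(scalerAl, scalerAr) -!mul_mpolyC -mpolyXD.
by do 2 apply: in_ImMl; exact: inPQ.
Qed.

End IdealIm.

Theorem lemma4p2 (F : finFieldType) (m s : nat) (f G : {mpoly F[4]}) :
  (1 <= m)%N -> (1 <= s <= 3)%N ->
  (* f lies in F[x_1,...,x_k], k = 4 - s *)
  (forall a, a \in msupp f -> forall j : 'I_4, (4 - s <= j)%N -> a j = 0%N) ->
  (* G lies in F[x_1,x_2,x_3] *)
  (forall g, g \in msupp G -> g (inord 3 : 'I_4) = 0%N) ->
  (forall a g, a \in msupp f -> g \in msupp G ->
     exists t : 'I_4, (t < 4 - s)%N && (#|F| ^ m - 1 <= a t + g t)%N) ->
  in_Im m ((V4 F ^+ (#|F| - 1) * G) * f * moore F (4 - s)).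
Proof.
move=> _ _ _ _ exists_t; rewrite -!mulrA; apply: in_ImMl; rewrite mulrA.
apply: in_Im_mul_msupp => g a gG af.
have [t /andP[t_lt_k le_qm1]] := exists_t a g af gG.
have [M ->] := moore_var_factor F _ (Ordinal t_lt_k).
have -> : var F (Ordinal t_lt_k) = 'X_t.
  by congr 'X_ _; apply: val_inj; rewrite /= inordK.
by apply: in_Im_mpolyX_mulX; rewrite mnmDE addnC.
Qed.
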